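(* Let $f:\{0,1\}^m\to\mathbb{R}$ (viewed as a set function on $2^{[m]}$) be non-negative, monotone non-decreasing and submodular, with marginals $f(S\cup\{i\})-f(S)\in[0,1]$ for all $S\subseteq[m]$, $i\notin S$. Let $t\in\mathbb{R}$ and $\theta<0$, and define $g_{t,\theta}(x)=e^{-\theta t}\,\mathbb{E}_{X\sim\mathcal{D}(x)}\big[e^{\theta f(X)}\big]$ for $x\in[0,1]^m$. Then for every $x\in[0,1]^m$ and all distinct $a,b\in[m]$, the function $z\mapsto g_{t,\theta}(x+z(e_a-e_b))$ is concave on the interval $\{z: x+z(e_a-e_b)\in[0,1]^m\}$.
   Context: For $x\in[0,1]^m$, $\mathcal{D}(x)$ denotes the product distribution on $\{0,1\}^m$ with $\Pr[X_i=1]=x_i$ independently; a vector in $\{0,1\}^m$ is identified with the subset of $[m]$ it indicates. $e_i$ is the $i$-th standard basis vector. *)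

From mathcomp Require Import all_boot.
From Stdlib Require Import Reals.
Set Implicit Arguments. Unset Strict Implicit. Unset Printing Implicit Defensive.

Open Scope R_scope.

Definition prodprob (m : nat) (x : 'I_m -> R) (S : {set 'I_m}) : R :=
  \big[Rmult/1]_(i : 'I_m) (if i \in S then x i else 1 - x i).

Definition expect (m : nat) (x : 'I_m -> R) (F : {set 'I_m} -> R) : R :=
  \big[Rplus/0]_(S : {set 'I_m}) (prodprob x S * F S).

Definition g_fun (m : nat) (f : {set 'I_m} -> R) (t theta : R) (x : 'I_m -> R) : R :=
  exp (- theta * t) * expect x (fun S => exp (theta * f S)).

Definition e_vec (m : nat) (i : 'I_m) : 'I_m -> R :=
  fun j => if j == i then 1 else 0.

Definition shift_pt (m : nat) (x : 'I_m -> R) (a b : 'I_m) (z : R) : 'I_m -> R :=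
  fun j => x j + z * (e_vec a j - e_vec b j).

Definition in_cube (m : nat) (x : 'I_m -> R) : Prop :=
  forall i, 0 <= x i <= 1.

Definition nonneg_fun (m : nat) (f : {set 'I_m} -> R) : Prop :=
  forall S, 0 <= f S.

Definition monotone_fun (m : nat) (f : {set 'I_m} -> R) : Prop :=
  forall S T : {set 'I_m}, S \subset T -> f S <= f T.

Definition submodular_fun (m : nat) (f : {set 'I_m} -> R) : Prop :=
  forall S T : {set 'I_m}, f (S :|: T) + f (S :&: T) <= f S + f T.

Definition marginals_in_01 (m : nat) (f : {set 'I_m} -> R) : Prop :=
  forall (S : {set 'I_m}) (i : 'I_m), i \notin S ->
    0 <= f (i |: S) - f S <= 1.

Definition concave_on (I : R -> Prop) (h : R -> R) : Prop :=
  forall z1 z2 l, I z1 -> I z2 -> 0 <= l <= 1 ->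
    l * h z1 + (1 - l) * h z2 <= h (l * z1 + (1 - l) * z2).

From HB Require Import structures.
From mathcomp Require Import all_boot.
From Stdlib Require Import Reals Lra.
Open Scope R_scope.
Set Implicit Arguments.

(* Move along the direction e_a - e_b, i.e. put y(z) = x + z (e_a - e_b).
   Group the outcomes S of D(y(z)) into blocks {S, a+S, b+S, a+b+S} with a, b not in S.
   The probability of each member of a block is Prest(S) (the weight of the coordinates
   other than a, b, independent of z) times a product of the factors (x_a + z) or
   1 - (x_a + z) and (x_b - z) or 1 - (x_b - z).  Hence, for h := exp(theta f), the
   contribution of a block is a polynomial of degree 2 in z whose leading coefficient is
   -Prest(S) (h(S) + h(a+b+S) - h(a+S) - h(b+S)).  This is nonpositive because h is
   supermodular on the block: f monotone and submodular and theta < 0 make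
   h(a+S) + h(b+S) <= h(a+b+S) + h(S).  So every block is concave in z, so is their sum,
   and so is g_{t,theta} = e^{-theta t} * sum.  Concavity even holds on all of R. *)

Lemma RplusA : associative Rplus. Proof. by move=> *; rewrite Rplus_assoc. Qed.
Lemma RmultA : associative Rmult. Proof. by move=> *; rewrite Rmult_assoc. Qed.
HB.instance Definition _ := Monoid.isComLaw.Build R 0 Rplus RplusA Rplus_comm Rplus_0_l.
HB.instance Definition _ := Monoid.isComLaw.Build R 1 Rmult RmultA Rmult_comm Rmult_1_l.

Lemma exp_le (u v : R) : u <= v -> exp u <= exp v.
Proof.
move=> H; case: (Rle_lt_or_eq_dec u v H) => [/exp_increasing|->]; lra.
Qed.

Lemma exp_neg_supermodular (th F0 Fa Fb Fab : R) : th < 0 -> F0 <= Fa -> F0 <= Fb ->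
  Fab + F0 <= Fa + Fb ->
  exp (th * Fa) + exp (th * Fb) <= exp (th * Fab) + exp (th * F0).
Proof.
move=> hth h0a h0b hsub.
have ea : exp (th * Fa) <= exp (th * F0) by apply: exp_le; nra.
have eb : exp (th * Fb) <= exp (th * F0) by apply: exp_le; nra.
have eprod : exp (th * Fa) * exp (th * Fb) <= exp (th * Fab) * exp (th * F0).
  by rewrite -!exp_plus; apply: exp_le; nra.
(* With A, B <= C and A B <= D C:  C (A + B) <= C^2 + A B <= C (C + D),
   the first step being (C - A)(C - B) >= 0. *)
have := exp_pos (th * F0); have := exp_pos (th * Fa); have := exp_pos (th * Fb).
nra.
Qed.

(* The contribution of one block: the outcome-probabilities of coordinates a and b at
   (x_a + z, x_b - z), times the weight P of the other coordinates, against the values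
   h0, ha, hb, hab of the block. *)
Definition corner_mix (xa xb P h0 ha hb hab z : R) : R :=
  (1 - (xa + z)) * ((1 - (xb - z)) * P) * h0 +
  (xa + z) * ((1 - (xb - z)) * P) * ha +
  (1 - (xa + z)) * ((xb - z) * P) * hb +
  (xa + z) * ((xb - z) * P) * hab.

(* A block is concave in z when its values are supermodular: the z^2 coefficient is
   -P (h0 + hab - ha - hb). *)
Lemma corner_mix_concave (xa xb P h0 ha hb hab : R) :
  0 <= P -> ha + hb <= hab + h0 ->
  concave_on (fun _ => True) (corner_mix xa xb P h0 ha hb hab).
Proof.
move=> hP hs z1 z2 l _ _ hl.
set Q := corner_mix xa xb P h0 ha hb hab.
have gap : Q (l * z1 + (1 - l) * z2) - (l * Q z1 + (1 - l) * Q z2) =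
   P * (h0 + hab - ha - hb) * (l * (1 - l)) * ((z1 - z2) * (z1 - z2)).
  by rewrite /Q /corner_mix; ring.
have : 0 <= P * (h0 + hab - ha - hb) * (l * (1 - l)) * ((z1 - z2) * (z1 - z2)).
  apply: Rmult_le_pos; last exact: Rle_0_sqr.
  by apply: Rmult_le_pos; [apply: Rmult_le_pos|]; nra.
lra.
Qed.

Section SubsetSums.
Variable T : finType.

Lemma sum_pair_off (a : T) (G : {set T} -> R) :
  \big[Rplus/0]_(S : {set T}) G S =
  \big[Rplus/0]_(S : {set T} | a \notin S) (G S + G (a |: S)).
Proof.
rewrite (bigID (fun S : {set _} => a \in S)) /= Rplus_comm big_split /=.
congr (_ + _).
rewrite (reindex_onto (fun S => a |: S) (fun S => S :\ a)) /=; last first.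
  by move=> S aS; rewrite setD1K.
apply: eq_bigl => S; rewrite setU11 /=; apply/eqP/idP => [<-|aS].
  by rewrite !inE eqxx.
by rewrite setU1K.
Qed.

Lemma sum_concave_comb (P : pred {set T}) (l : R) (F1 F2 F3 : {set T} -> R) :
  (forall S, P S -> l * F1 S + (1 - l) * F2 S <= F3 S) ->
  l * \big[Rplus/0]_(S | P S) F1 S + (1 - l) * \big[Rplus/0]_(S | P S) F2 S
  <= \big[Rplus/0]_(S | P S) F3 S.
Proof.
move=> H; elim/big_rec3: _ => [|S y1 y2 y3 PS IH]; first lra.
have := H S PS; lra.
Qed.

Lemma sum_blocks (a b : T) (G : {set T} -> R) : a != b ->
  \big[Rplus/0]_(S : {set T}) G S =
  \big[Rplus/0]_(S : {set T} | (a \notin S) && (b \notin S))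
     (G S + G (a |: S) + G (b |: S) + G (a |: (b |: S))).
Proof.
move=> hab; rewrite (sum_pair_off b) big_mkcond (sum_pair_off a) /=.
rewrite big_mkcond [RHS]big_mkcond /=; apply: eq_bigr => S _.
rewrite in_setU1 eq_sym (negbTE hab) /=.
case: (a \in S); case: (b \in S) => /=; rewrite ?[b |: (a |: S)]setUCA; lra.
Qed.

End SubsetSums.

Lemma exp_block_supermodular (m : nat) (f : {set 'I_m} -> R) (theta : R)
    (a b : 'I_m) (S : {set 'I_m}) :
  theta < 0 -> monotone_fun f -> submodular_fun f ->
  a != b -> a \notin S -> b \notin S ->
  exp (theta * f (a |: S)) + exp (theta * f (b |: S)) <=
  exp (theta * f (a |: (b |: S))) + exp (theta * f S).
Proof.
move=> htheta hmono hsub hab aS bS.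
have union : (a |: S) :|: (b |: S) = a |: (b |: S).
  by rewrite setUACA setUid -setUA.
have inter : (a |: S) :&: (b |: S) = S.
  rewrite -setUIl; apply/setP => i; rewrite !inE.
  by case: (eqVneq i a) => [->|_]; rewrite ?(negbTE hab).
apply: exp_neg_supermodular => //; try by apply: hmono; apply: subsetUr.
by have := hsub (a |: S) (b |: S); rewrite union inter.
Qed.

Section Shift.
Variables (m : nat) (x : 'I_m -> R) (a b : 'I_m).
Hypothesis hab : a != b.

Definition Prest (S : {set 'I_m}) : R :=
  \big[Rmult/1]_(i | (i != a) && (i != b)) (if i \in S then x i else 1 - x i).

Lemma Prest_ge0 S : in_cube x -> 0 <= Prest S.
Proof.
move=> hx; rewrite /Prest; elim/big_rec: _ => [|i y _ IH]; first lra.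
apply: Rmult_le_pos => //; case: (hx i) => h1 h2; case: (i \in S); lra.
Qed.

Lemma Prest_add (c : 'I_m) S : (c == a) || (c == b) -> Prest (c |: S) = Prest S.
Proof.
move=> hc; apply: eq_bigr => i /andP [ia ib]; rewrite in_setU1.
suff /negbTE -> : i != c by [].
by apply/eqP => ic; move: hc; rewrite -ic (negbTE ia) (negbTE ib).
Qed.

Lemma prodprob_shift z S :
  prodprob (shift_pt x a b z) S =
  (if a \in S then x a + z else 1 - (x a + z)) *
  ((if b \in S then x b - z else 1 - (x b - z)) * Prest S).
Proof.
have hba : b != a by rewrite eq_sym.
rewrite /prodprob (bigD1 a) //= (bigD1 b) /=; last by rewrite hba.
rewrite /shift_pt /e_vec !eqxx (negbTE hab) (negbTE hba).
rewrite !Rminus_0_r Rminus_0_l Rmult_1_r -Ropp_mult_distr_r Rmult_1_r.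
congr (_ * (_ * _)).
apply: eq_big => [i|i /andP [ia ib]]; first by rewrite andbC.
by rewrite (negbTE ia) (negbTE ib) Rminus_0_r Rmult_0_r Rplus_0_r.
Qed.

Lemma expect_shift_blocks (h : {set 'I_m} -> R) z :
  expect (shift_pt x a b z) h =
  \big[Rplus/0]_(S : {set 'I_m} | (a \notin S) && (b \notin S))
     corner_mix (x a) (x b) (Prest S) (h S) (h (a |: S)) (h (b |: S))
                (h (a |: (b |: S))) z.
Proof.
rewrite /expect (sum_blocks a b _ hab); apply: eq_bigr => S /andP [aS bS].
rewrite !prodprob_shift !Prest_add ?eqxx ?orbT // !in_setU1 !eqxx.
rewrite (negbTE aS) (negbTE bS) eq_sym (negbTE hab) /= /corner_mix; ring.
Qed.

Lemma expect_shift_concave (h : {set 'I_m} -> R) : in_cube x ->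
  (forall S : {set 'I_m}, a \notin S -> b \notin S ->
     h (a |: S) + h (b |: S) <= h (a |: (b |: S)) + h S) ->
  concave_on (fun _ => True) (fun z => expect (shift_pt x a b z) h).
Proof.
move=> hx hsup z1 z2 l _ _ hl; rewrite !expect_shift_blocks.
apply: sum_concave_comb => S /andP [aS bS].
by apply: corner_mix_concave => //; [exact: Prest_ge0 | exact: hsup].
Qed.

End Shift.

Unset Implicit Arguments.

Theorem claim3p4 (m : nat) (f : {set 'I_m} -> R)
  (hnn : nonneg_fun f) (hmono : monotone_fun f) (hsub : submodular_fun f)
  (hmarg : marginals_in_01 f)
  (t theta : R) (htheta : theta < 0)
  (x : 'I_m -> R) (hx : in_cube x) (a b : 'I_m) (hab : a != b) :
  concave_on (fun z => in_cube (shift_pt x a b z))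
             (fun z => g_fun f t theta (shift_pt x a b z)).
Proof.
move=> z1 z2 l _ _ hl; rewrite /g_fun.
have block_supermodular (S : {set 'I_m}) : a \notin S -> b \notin S ->
    exp (theta * f (a |: S)) + exp (theta * f (b |: S)) <=
    exp (theta * f (a |: (b |: S))) + exp (theta * f S).
  exact: exp_block_supermodular.
have := expect_shift_concave a b hab (fun S => exp (theta * f S)) hx block_supermodular
  (z1 := z1) (z2 := z2) I I hl.
have := exp_pos (- theta * t); nra.
Qed.
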